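(* Let $\mathbf a,\mathbf b\in\mathbb R^n$ be nonzero, $L$ a positive integer, $\tilde{\mathbf a}=\textsc{Round}(\mathbf a/\|\mathbf a\|,L)$, $\tilde{\mathbf b}=\textsc{Round}(\mathbf b/\|\mathbf b\|,L)$, $\mathbf a'=\|\mathbf a\|\tilde{\mathbf a}$, $\mathbf b'=\|\mathbf b\|\tilde{\mathbf b}$, and $\mathcal I=\{i:\mathbf a[i]\neq0\text{ and }\mathbf b[i]\neq0\}$. Then: (1) for all $i$, $\mathbf a'[i]^2/\|\mathbf a'\|^2$ and $\mathbf b'[i]^2/\|\mathbf b'\|^2$ are integer multiples of $1/L$; (2) for any $L$, sample number $m$ and random seed $s$, the Weighted MinHash sketch yields identical outputs on $\mathbf a$ and $\mathbf a'$ and on $\mathbf b$ and $\mathbf b'$, i.e. $W_{\mathbf a}=W_{\mathbf a'}$ and $W_{\mathbf b}=W_{\mathbf b'}$; (3) for $\epsilon\in(0,1)$ and $L\ge 9n^6/\epsilon^2$, $|\langle\mathbf a,\mathbf b\rangle-\langle\mathbf a',\mathbf b'\rangle|\le\epsilon\max(\|\mathbf a_{\mathcal I}\|\|\mathbf b\|,\|\mathbf a\|\|\mathbf b_{\mathcal I}\|)$; (4) for $L\ge n^3$, $\max(\|\mathbf a'_{\mathcal I}\|\|\mathbf b'\|,\|\mathbf a'\|\|\mathbf b'_{\mathcal I}\|)\le 2\max(\|\mathbf a_{\mathcal I}\|\|\mathbf b\|,\|\mathbf a\|\|\mathbf b_{\mathcal I}\|)$.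
   Context: $\|\cdot\|$ is the Euclidean norm; $\mathbf a_{\mathcal I}$ is $\mathbf a$ restricted to indices in $\mathcal I$. Rounding procedure $\textsc{Round}(\mathbf z,L)$ for a unit vector $\mathbf z\in\mathbb R^n$: set $\tilde{\mathbf z}[i]=\operatorname{sign}(\mathbf z[i])\sqrt{\lfloor \mathbf z[i]^2L\rfloor/L}$ for all $i$; let $i^*=\arg\max_i|\mathbf z[i]|$; set $\delta=1-\|\tilde{\mathbf z}\|^2$ and replace $\tilde{\mathbf z}[i^*]$ by $\operatorname{sign}(\mathbf z[i^*])\sqrt{\tilde{\mathbf z}[i^*]^2+\delta}$; return $\tilde{\mathbf z}$. Weighted MinHash sketch of $\mathbf a$ (sample number $m$, seed $s$, integer $L$): set $\tilde{\mathbf a}=\textsc{Round}(\mathbf a/\|\mathbf a\|,L)$. For each $i\in\{1,\dots,n\}$ let $\bar{\mathbf a}^{(i)}\in\mathbb R^L$ have its first $\tilde{\mathbf a}[i]^2L$ entries equal to $\tilde{\mathbf a}[i]$ and the rest $0$, and let $\bar{\mathbf a}=[\bar{\mathbf a}^{(1)},\dots,\bar{\mathbf a}^{(n)}]\in\mathbb R^{nL}$. For $i=1,\dots,m$, using seed $s$ select a fully random hash function $h^i:\{1,\dots,nL\}\to[0,1]$ (determined by $s$), let $j^*=\arg\min_{j:\bar{\mathbf a}[j]\neq0}h^i(j)$, and set $W^{hash}_{\mathbf a}[i]=h^i(j^* )$, $W^{val}_{\mathbf a}[i]=\bar{\mathbf a}[j^*]$. The sketch is $W_{\mathbf a}=\{W^{hash}_{\mathbf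 a},W^{val}_{\mathbf a},\|\mathbf a\|\}$. *)

From HB Require Import structures.
From mathcomp Require Import all_boot all_order all_algebra.
From mathcomp Require Import reals.
Set Implicit Arguments. Unset Strict Implicit. Unset Printing Implicit Defensive.
Import Order.TTheory GRing.Theory Num.Theory.
Local Open Scope ring_scope.

Section Defs.
Variable R : realType.
Variable n : nat.

Definition dotv (u v : 'rV[R]_n) : R := \sum_(i < n) u 0 i * v 0 i.
Definition vnorm (v : 'rV[R]_n) : R := Num.sqrt (\sum_(i < n) v 0 i ^+ 2).
Definition rnorm (I : {set 'I_n}) (v : 'rV[R]_n) : R :=
  Num.sqrt (\sum_(i in I) v 0 i ^+ 2).

Definition round0 (z : 'rV[R]_n) (L : nat) : 'rV[R]_n :=
  \row_i (Num.sg (z 0 i) * Num.sqrt ((Num.floor (z 0 i ^+ 2 * L%:R))%:~R / L%:R)).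
Definition istar (z : 'rV[R]_n) : option 'I_n :=
  [pick i | [forall j, `|z 0 j| <= `|z 0 i|]].
Definition Round (z : 'rV[R]_n) (L : nat) : 'rV[R]_n :=
  let zt := round0 z L in
  let delta := 1 - vnorm zt ^+ 2 in
  \row_i (if istar z == Some i
          then Num.sg (z 0 i) * Num.sqrt (zt 0 i ^+ 2 + delta)
          else zt 0 i).

(* The nL coordinates of abar are indexed by pairs (i, k) : 'I_n * 'I_L,
   block i, position k within the block. abar[(i,k)] = ta[i] if k < ta[i]^2 L
   (ta[i]^2 L is an integer; we take its floor to obtain the count). *)
Definition abar (L : nat) (ta : 'rV[R]_n) (j : 'I_n * 'I_L) : R :=
  if ((j.2 : int) < Num.floor (ta 0 j.1 ^+ 2 * L%:R))%R then ta 0 j.1 else 0.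

Definition jstar (L : nat) (ta : 'rV[R]_n) (h : 'I_n * 'I_L -> R)
  : option ('I_n * 'I_L) :=
  [pick j | (abar ta j != 0) &&
            [forall k, (abar ta k != 0) ==> (h j <= h k)]].

(* W_a = (W^hash_a, W^val_a, ||a||), hash functions h^1..h^m given by h *)
Definition sketch (L m : nat) (h : 'I_m -> 'I_n * 'I_L -> R) (a : 'rV[R]_n)
  : 'rV[R]_m * 'rV[R]_m * R :=
  let ta := Round ((vnorm a)^-1 *: a) L in
  (\row_(i < m) (match jstar ta (h i) with Some j => h i j | None => 0 end),
   \row_(i < m) (match jstar ta (h i) with Some j => abar ta j | None => 0 end),
   vnorm a).

End Defs.

(* Rounding pushes each squared coordinate of the unit vector z = a/|a| down to
   a multiple of 1/L, losing less than 1/L, and gives the total deficit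
   delta <= n/L back to a largest coordinate, whose square is at least 1/n.
   So t = Round(z, L) is again a unit vector with squares in (1/L)Z -- hence
   Round(t, L) = t and the sketch cannot tell a from a' -- and it has the
   signs of z, |z_i - t_i| <= sqrt(n/L) and |t_i| <= n|z_i|, even 2|z_i| once
   L >= n^3.  Writing a_i b_i - a'_i b'_i = (a_i - a'_i) b_i + a'_i (b_i - b'_i),
   only indices in I contribute, each at most (1 + n) sqrt(n/L) times the
   maximum in (3); (4) follows from |a'_i| <= 2|a_i|. *)

From HB Require Import structures.
From mathcomp Require Import all_boot all_order all_algebra.
From mathcomp Require Import reals.
From mathcomp Require Import ring lra.
Set Implicit Arguments. Unset Strict Implicit. Unset Printing Implicit Defensive.
Import Order.TTheory GRing.Theory Num.Theory.
Local Open Scope ring_scope.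

Section VectorNorms.
Variables (R : realType) (n : nat).
Implicit Types (u v : 'rV[R]_n) (I : {set 'I_n}).

Lemma sqr_vnorm v : vnorm v ^+ 2 = \sum_i v 0 i ^+ 2.
Proof. by rewrite sqr_sqrtr // sumr_ge0 // => i _; rewrite sqr_ge0. Qed.

Lemma vnormZ (c : R) v : vnorm (c *: v) = `|c| * vnorm v.
Proof.
rewrite /vnorm; under eq_bigr do rewrite mxE exprMn.
by rewrite -mulr_sumr sqrtrM ?sqr_ge0 // sqrtr_sqr.
Qed.

Lemma vnorm_gt0 v : v != 0 -> 0 < vnorm v.
Proof.
move=> v0; rewrite sqrtr_gt0 lt_def sumr_ge0 ?andbT => [|i _]; last exact: sqr_ge0.
apply: contra v0 => /eqP sum0; apply/eqP/rowP => j; rewrite mxE.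
by apply/eqP; rewrite -sqrf_eq0; apply/eqP/(psumr_eq0P _ sum0) => // i _; exact: sqr_ge0.
Qed.

Lemma vnorm_normalize v : v != 0 -> vnorm ((vnorm v)^-1 *: v) = 1.
Proof.
move=> v0; have v_gt0 := vnorm_gt0 v0.
by rewrite vnormZ ger0_norm ?invr_ge0 ?ltW // mulVf ?gt_eqF.
Qed.

Lemma normalizeK v : v != 0 -> vnorm v *: ((vnorm v)^-1 *: v) = v.
Proof. by move=> v0; rewrite scalerA divff ?scale1r ?gt_eqF ?vnorm_gt0. Qed.

Lemma abs_le_rnorm I v i : i \in I -> `|v 0 i| <= rnorm I v.
Proof.
move=> iI; rewrite -sqrtr_sqr ler_sqrt ?sumr_ge0 // => [|j _]; last exact: sqr_ge0.
by rewrite (bigD1 i) //= lerDl sumr_ge0 // => j _; rewrite sqr_ge0.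
Qed.

Lemma rnorm_le I (c : R) u v :
  0 <= c -> (forall i, `|u 0 i| <= c * `|v 0 i|) -> rnorm I u <= c * rnorm I v.
Proof.
move=> c0 uv; have sumsq_ge0 (w : 'rV[R]_n) : 0 <= \sum_(i in I) w 0 i ^+ 2.
  by rewrite sumr_ge0 // => i _; rewrite sqr_ge0.
rewrite -ler_sqr ?nnegrE ?mulr_ge0 ?sqrtr_ge0 // exprMn !sqr_sqrtr //.
rewrite mulr_sumr; apply: ler_sum => i _.
rewrite -(real_normK (num_real (u 0 i))) -(real_normK (num_real (v 0 i))).
have := uv i; have := normr_ge0 (u 0 i); nra.
Qed.

Lemma dotv_perturb I (c d : R) u v (u' v' : 'rV[R]_n) :
  0 <= c -> 0 <= d ->
  (forall i, i \notin I -> u 0 i = 0 \/ v 0 i = 0) ->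
  (forall i, `|u' 0 i| <= c * `|u 0 i|) -> (forall i, `|v' 0 i| <= c * `|v 0 i|) ->
  (forall i, `|u 0 i - u' 0 i| <= d * vnorm u) ->
  (forall i, `|v 0 i - v' 0 i| <= d * vnorm v) ->
  `|dotv u v - dotv u' v'| <=
    n%:R * ((1 + c) * d) * Num.max (rnorm I u * vnorm v) (vnorm u * rnorm I v).
Proof.
move=> c0 d0 supp uu' vv' du dv; set M := Num.max _ _.
have M0 : 0 <= M by rewrite le_max mulr_ge0 ?sqrtr_ge0.
rewrite /dotv -sumrB -mulrA mulr_natl -[X in _ *+ X]card_ord -sumr_const.
apply: le_trans (ler_norm_sum _ _ _) (ler_sum _ _) => i _.
have [iI|iNI] := boolP (i \in I); last first.
  have zero_of (w w' : 'rV[R]_n) : `|w' 0 i| <= c * `|w 0 i| -> w 0 i = 0 -> w' 0 i = 0.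
    by move=> ww' w0; apply/eqP; rewrite -normr_le0; move: ww'; rewrite w0 normr0 mulr0.
  have [u0|v0] := supp i iNI.
    by rewrite (zero_of u u' (uu' i) u0) u0 !mul0r subrr normr0 !mulr_ge0 ?addr_ge0.
  by rewrite (zero_of v v' (vv' i) v0) v0 !mulr0 subrr normr0 !mulr_ge0 ?addr_ge0.
have -> : u 0 i * v 0 i - u' 0 i * v' 0 i =
          (u 0 i - u' 0 i) * v 0 i + u' 0 i * (v 0 i - v' 0 i) by ring.
apply: le_trans (ler_normD _ _) _; rewrite !normrM.
have first_le : `|u 0 i - u' 0 i| * `|v 0 i| <= d * M.
  apply: le_trans (ler_pM _ _ (du i) (abs_le_rnorm v iI)) _ => //.
  by rewrite -mulrA ler_wpM2l // le_max lexx orbT.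
have second_le : `|u' 0 i| * `|v 0 i - v' 0 i| <= c * d * M.
  apply: le_trans (ler_pM _ _ (uu' i) (dv i)) _ => //.
  apply: le_trans (_ : c * rnorm I u * (d * vnorm v) <= _).
    by rewrite ler_wpM2r ?mulr_ge0 ?sqrtr_ge0 // ler_wpM2l // abs_le_rnorm.
  by rewrite mulrACA ler_wpM2l ?mulr_ge0 // le_max lexx.
lra.
Qed.

End VectorNorms.

Lemma sumr_const_ord (V : pzRingType) n (x : V) : \sum_(i < n) x = n%:R * x.
Proof. by rewrite sumr_const card_ord mulr_natl. Qed.

Lemma abs_sub_le_sqrt (R : realType) (x y : R) :
  0 <= x -> 0 <= y -> `|x - y| <= Num.sqrt `|x ^+ 2 - y ^+ 2|.
Proof.
move=> x0 y0; rewrite -sqrtr_sqr ler_sqrt //.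
have [xy|yx] := lerP x y.
  by rewrite ler0_norm ?subr_le0 ?ler_sqr ?nnegrE //; nra.
by rewrite gtr0_norm ?subr_gt0 ?ltr_sqr ?nnegrE //; nra.
Qed.

Lemma abs_le_of_sqr (R : realType) (x y c : R) :
  0 <= c -> x ^+ 2 <= c ^+ 2 * y ^+ 2 -> `|x| <= c * `|y|.
Proof.
move=> c0 h; rewrite -ler_sqr ?nnegrE ?mulr_ge0 // exprMn.
by rewrite !real_normK ?num_real.
Qed.

Section Round.
Variables (R : realType) (n L : nat) (z : 'rV[R]_n).
Hypotheses (L_gt0 : (0 < L)%N) (z_unit : vnorm z = 1).

Local Notation t := (Round z L).
Local Notation r := (round0 z L).
Local Notation defect := (1 - vnorm (round0 z L) ^+ 2).
Local Notation fl i := (Num.floor (z 0 i ^+ 2 * L%:R)).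

Let L_pos : 0 < L%:R :> R. Proof. by rewrite ltr0n. Qed.

Let sum_sqr_z : \sum_i z 0 i ^+ 2 = 1.
Proof. by rewrite -sqr_vnorm z_unit expr1n. Qed.

Lemma sqr_round0 i : r 0 i ^+ 2 = (fl i)%:~R / L%:R.
Proof.
have fl_ge0 : 0 <= fl i by rewrite floor_ge0 mulr_ge0 ?sqr_ge0 ?ler0n.
rewrite mxE exprMn sqr_sqrtr ?divr_ge0 ?ler0n ?ler0z // sqr_sg.
case: eqP => [z0|_]; last by rewrite mul1r.
by rewrite z0 expr0n /= !mul0r floor0 mul0r.
Qed.

Lemma sqr_round0_le i : r 0 i ^+ 2 <= z 0 i ^+ 2.
Proof. by rewrite sqr_round0 ler_pdivrMr // floor_le. Qed.

Lemma sqr_round0_gt i : z 0 i ^+ 2 - r 0 i ^+ 2 < L%:R^-1.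
Proof.
rewrite sqr_round0 ltrBlDr -[X in _ < X + _]mul1r -mulrDl ltr_pdivlMr // addrC.
by have := floorD1_gt (z 0 i ^+ 2 * L%:R); rewrite intrD.
Qed.

Lemma round_defect_ge0 : 0 <= defect.
Proof.
by rewrite subr_ge0 sqr_vnorm -sum_sqr_z; apply: ler_sum => i _; exact: sqr_round0_le.
Qed.

Lemma round_defect_le : defect <= n%:R / L%:R.
Proof.
rewrite -sumr_const_ord sqr_vnorm -{1}sum_sqr_z -sumrB.
by apply: ler_sum => i _; apply/ltW/sqr_round0_gt.
Qed.

Lemma round_defect_frac : exists k : int, defect = k%:~R / L%:R.
Proof.
exists (L%:Z - \sum_i fl i); rewrite sqr_vnorm.
under eq_bigr do rewrite sqr_round0.
rewrite -mulr_suml intrB rmorph_sum /= mulrBl divff ?gt_eqF //.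
Qed.

Lemma Round_sg i : t 0 i = Num.sg (z 0 i) * `|t 0 i|.
Proof.
set s := Num.sg (z 0 i).
have sg_sqrt x : s * Num.sqrt x = s * `|s * Num.sqrt x|.
  by rewrite normrM (ger0_norm (sqrtr_ge0 x)) mulrA /s -{2}sgr_id -numEsg.
by rewrite /Round mxE; case: ifP => _; rewrite ?mxE; apply: sg_sqrt.
Qed.

Lemma istar_max : exists2 s, istar z = Some s & forall j, `|z 0 j| <= `|z 0 s|.
Proof.
case: (istar z) / pickP => [s /forallP s_max|no_max]; first by exists s.
case: n z no_max sum_sqr_z => [|k] z' no_max.
  by rewrite big_ord0 => /eqP; rewrite eq_sym oner_eq0.
case: (@arg_maxP _ _ _ ord0 predT (fun i => `|z' 0 i|)) => // s _ s_max.
by have /forallP := no_max s; case=> j; exact: s_max.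
Qed.

Lemma sqr_Round_spec : exists s, 1 <= n%:R * z 0 s ^+ 2 /\
  forall i, t 0 i ^+ 2 = r 0 i ^+ 2 + (i == s)%:R * defect.
Proof.
have [s istar_s s_max] := istar_max.
have z_s_large : 1 <= n%:R * z 0 s ^+ 2.
  rewrite -sumr_const_ord -sum_sqr_z ler_sum // => j _.
  rewrite -(real_normK (num_real (z 0 j))) -(real_normK (num_real (z 0 s))).
  by rewrite ler_sqr ?nnegrE.
exists s; split=> // i; rewrite /Round mxE istar_s (inj_eq Some_inj) eq_sym.
have [->|_] := eqVneq i s; last by rewrite mul0r addr0.
have z_s0 : z 0 s != 0.
  by apply: contraTneq z_s_large => ->; rewrite expr0n mulr0 ler10.
rewrite mul1r exprMn sqr_sg z_s0 mul1r sqr_sqrtr // addr_ge0 ?sqr_ge0 //.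
exact: round_defect_ge0.
Qed.

Lemma vnorm_Round : vnorm t = 1.
Proof.
have [s [_ sqr_t]] := sqr_Round_spec.
rewrite /vnorm (eq_bigr _ (fun i _ => sqr_t i)) big_split /= -sqr_vnorm.
rewrite (bigD1 s) //= eqxx mul1r big1 => [|j /negbTE ->]; last by rewrite mul0r.
by rewrite addr0 addrC subrK sqrtr1.
Qed.

Lemma sqr_Round_le1 i : t 0 i ^+ 2 <= 1.
Proof.
rewrite -(@expr1n R 2) -vnorm_Round sqr_vnorm (bigD1 i) //= lerDl.
by rewrite sumr_ge0 // => j _; rewrite sqr_ge0.
Qed.

Lemma sqr_Round_frac i : exists k : int, t 0 i ^+ 2 = k%:~R / L%:R.
Proof.
have [s [_ ->]] := sqr_Round_spec; have [k ->] := round_defect_frac.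
rewrite sqr_round0; have [->|_] := eqVneq i s; last first.
  by exists (fl i); rewrite mul0r addr0.
by exists (fl s + k); rewrite mul1r intrD mulrDl.
Qed.

Lemma sqr_Round_dist i : `|z 0 i ^+ 2 - t 0 i ^+ 2| <= n%:R / L%:R.
Proof.
have n_ge1 : 1 <= n%:R :> R by rewrite ler1n (leq_ltn_trans (leq0n i)).
have [s [_ ->]] := sqr_Round_spec.
have := sqr_round0_le i; have := sqr_round0_gt i.
have := round_defect_ge0; have := round_defect_le.
have : L%:R^-1 <= n%:R / L%:R :> R by rewrite ler_peMl ?invr_ge0 ?ler0n.
case: (i == s) => /=; rewrite ?mul1r ?mul0r;
  case: (lerP (z 0 i ^+ 2) (t 0 i ^+ 2)) => _; rewrite ler_norml; lra.
Qed.

Lemma Round_dist i : `|z 0 i - t 0 i| <= Num.sqrt (n%:R / L%:R).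
Proof.
rewrite {1}(numEsg (z 0 i)) {1}Round_sg -mulrBr normrM normr_sg.
have dist_le : `|(`|z 0 i| - `|t 0 i|)| <= Num.sqrt (n%:R / L%:R).
  apply: le_trans (abs_sub_le_sqrt (normr_ge0 _) (normr_ge0 _)) _.
  by rewrite ler_sqrt ?divr_ge0 ?ler0n // !real_normK ?num_real ?sqr_Round_dist.
by case: (_ != 0); rewrite ?mul1r ?mul0r ?sqrtr_ge0.
Qed.

Lemma Round_le i : `|t 0 i| <= n%:R * `|z 0 i|.
Proof.
have n_ge1 : 1 <= n%:R :> R by rewrite ler1n (leq_ltn_trans (leq0n i)).
apply: abs_le_of_sqr; first exact: ler0n.
have [s [z_s_large sqr_t]] := sqr_Round_spec.
have [->|ne] := eqVneq i s.
  apply: le_trans (sqr_Round_le1 s) (le_trans z_s_large _).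
  by rewrite ler_wpM2r ?sqr_ge0 // expr2 ler_peMl ?ler0n.
rewrite sqr_t (negbTE ne) mul0r addr0; apply: le_trans (sqr_round0_le i) _.
by rewrite ler_peMl ?sqr_ge0 ?exprn_ege1.
Qed.

Lemma Round_le2 i : (n ^ 3 <= L)%N -> `|t 0 i| <= 2 * `|z 0 i|.
Proof.
move=> n3_le_L; have n_ge1 : 1 <= n%:R :> R by rewrite ler1n (leq_ltn_trans (leq0n i)).
apply: abs_le_of_sqr => //; have [s [z_s_large sqr_t]] := sqr_Round_spec.
rewrite sqr_t; have [->|_] := eqVneq i s; last first.
  by rewrite mul0r addr0; have := sqr_round0_le i; have := sqr_ge0 (z 0 i); lra.
have defect_le : defect <= z 0 s ^+ 2.
  apply: le_trans round_defect_le _; rewrite ler_pdivrMr //.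
  have : n%:R ^+ 3 <= L%:R :> R by rewrite -natrX ler_nat.
  nra.
by rewrite mul1r expr2; have := sqr_round0_le s; have := sqr_ge0 (z 0 s); lra.
Qed.

End Round.

Lemma Round_id (R : realType) (n L : nat) (t : 'rV[R]_n) :
  (0 < L)%N -> vnorm t = 1 -> (forall i, exists k : int, t 0 i ^+ 2 = k%:~R / L%:R) ->
  Round t L = t.
Proof.
move=> L_gt0 t_unit t_frac; have L_neq0 : L%:R != 0 :> R by rewrite pnatr_eq0 -lt0n.
have round0_id : round0 t L = t.
  apply/rowP => i; have [k sqr_t] := t_frac i.
  by rewrite mxE sqr_t divfK // intrKfloor -sqr_t sqrtr_sqr -numEsg.
apply/rowP => i; rewrite /Round mxE round0_id t_unit expr1n subrr addr0.
by rewrite sqrtr_sqr -numEsg; case: ifP.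
Qed.

Section Rounded.
Variables (R : realType) (n L : nat).
Hypothesis L_gt0 : (0 < L)%N.

Definition rounded (a : 'rV[R]_n) := vnorm a *: Round ((vnorm a)^-1 *: a) L.

Variable a : 'rV[R]_n.
Hypothesis a_neq0 : a != 0.

Local Notation z := ((vnorm a)^-1 *: a).

Let z_unit : vnorm z = 1. Proof. exact: vnorm_normalize. Qed.
Let a_pos : 0 < vnorm a. Proof. exact: vnorm_gt0. Qed.

Lemma vnorm_rounded : vnorm (rounded a) = vnorm a.
Proof. by rewrite vnormZ vnorm_Round // mulr1 gtr0_norm. Qed.

Lemma normalize_rounded : (vnorm (rounded a))^-1 *: rounded a = Round z L.
Proof. by rewrite vnorm_rounded scalerA mulVf ?gt_eqF // scale1r. Qed.

Lemma rounded_sqr_frac i :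
  exists k : int, rounded a 0 i ^+ 2 / vnorm (rounded a) ^+ 2 = k%:~R / L%:R.
Proof.
have [k sqr_t] := sqr_Round_frac L_gt0 z_unit i.
exists k; rewrite -sqr_t vnorm_rounded mxE exprMn mulrAC divff ?mul1r //.
by rewrite expf_neq0 ?gt_eqF.
Qed.

Lemma sketch_rounded (m : nat) (h : 'I_m -> 'I_n * 'I_L -> R) :
  sketch h a = sketch h (rounded a).
Proof.
rewrite /sketch normalize_rounded vnorm_rounded.
by rewrite (Round_id L_gt0 (vnorm_Round L_gt0 z_unit) (sqr_Round_frac L_gt0 z_unit)).
Qed.

Lemma rounded_dist i : `|a 0 i - rounded a 0 i| <= Num.sqrt (n%:R / L%:R) * vnorm a.
Proof.
rewrite /rounded -{1}(normalizeK a_neq0) [X in X - _]mxE [X in _ - X]mxE -mulrBr.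
by rewrite normrM gtr0_norm // mulrC ler_pM2r // Round_dist.
Qed.

Let rounded_abs_le (c : R) i :
  `|Round z L 0 i| <= c * `|z 0 i| -> `|rounded a 0 i| <= c * `|a 0 i|.
Proof.
have aE : a 0 i = vnorm a * z 0 i by rewrite mxE mulrA divff ?mul1r ?gt_eqF.
have roundedE : rounded a 0 i = vnorm a * Round z L 0 i by rewrite /rounded mxE.
by rewrite aE roundedE !normrM (gtr0_norm a_pos) mulrCA ler_pM2l.
Qed.

Lemma rounded_le i : `|rounded a 0 i| <= n%:R * `|a 0 i|.
Proof. exact/rounded_abs_le/Round_le. Qed.

Lemma rounded_le2 i : (n ^ 3 <= L)%N -> `|rounded a 0 i| <= 2 * `|a 0 i|.
Proof. by move=> n3_le_L; apply/rounded_abs_le/Round_le2. Qed.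

End Rounded.

Lemma rounding_error_le (R : realType) (n L : nat) (eps : R) :
  0 < eps -> 9 * n%:R ^+ 6 / eps ^+ 2 <= L%:R ->
  n%:R * ((1 + n%:R) * Num.sqrt (n%:R / L%:R)) <= eps.
Proof.
move=> eps_gt0 L_large; have [->|n_gt0] := posnP n; first by rewrite mul0r ltW.
have n_ge1 : 1 <= n%:R :> R by rewrite ler1n.
have L_pos : 0 < L%:R :> R.
  by apply: lt_le_trans L_large; rewrite divr_gt0 ?exprn_gt0 ?mulr_gt0 ?ltr0n.
rewrite -ler_sqr ?nnegrE ?mulr_ge0 ?sqrtr_ge0 ?addr_ge0 ?ler0n ?(ltW eps_gt0) //.
rewrite !exprMn sqr_sqrtr ?divr_ge0 ?ler0n // mulrA mulrA ler_pdivrMr //.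
rewrite ler_pdivrMr ?exprn_gt0 // in L_large.
set x : R := n%:R in n_ge1 L_large *.
have factor_le : (1 + x) ^+ 2 <= 9 * x ^+ 3.
  have : x ^+ 2 <= x ^+ 3 by rewrite [x ^+ 3]exprS ler_peMl ?sqr_ge0.
  nra.
have -> : x ^+ 2 * (1 + x) ^+ 2 * x = x ^+ 3 * (1 + x) ^+ 2 by ring.
apply: (@le_trans _ _ (x ^+ 3 * (9 * x ^+ 3))).
  by rewrite ler_wpM2l // exprn_ge0 // (le_trans ler01).
by rewrite mulrCA -exprD [eps ^+ 2 * _]mulrC.
Qed.

Theorem lemma3 (R : realType) (n : nat) (a b : 'rV[R]_n) (L : nat) :
  a != 0 -> b != 0 -> (0 < L)%N ->
  let a' := vnorm a *: Round ((vnorm a)^-1 *: a) L in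
  let b' := vnorm b *: Round ((vnorm b)^-1 *: b) L in
  let I := [set i : 'I_n | (a 0 i != 0) && (b 0 i != 0)] in
  (* (1) *)
  (forall i : 'I_n,
     (exists k : int, a' 0 i ^+ 2 / vnorm a' ^+ 2 = k%:~R / L%:R) /\
     (exists k : int, b' 0 i ^+ 2 / vnorm b' ^+ 2 = k%:~R / L%:R)) /\
  (* (2) : for every sample number m and every seed, i.e. every choice of
     hash functions h^1..h^m with values in [0,1] *)
  (forall (m : nat) (h : 'I_m -> 'I_n * 'I_L -> R),
     (forall i j, 0 <= h i j <= 1) ->
     sketch h a = sketch h a' /\ sketch h b = sketch h b') /\
  (* (3) *)
  (forall eps : R, 0 < eps < 1 -> 9 * n%:R ^+ 6 / eps ^+ 2 <= L%:R ->
     `|dotv a b - dotv a' b'| <=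
       eps * Num.max (rnorm I a * vnorm b) (vnorm a * rnorm I b)) /\
  (* (4) *)
  ((n ^ 3 <= L)%N ->
     Num.max (rnorm I a' * vnorm b') (vnorm a' * rnorm I b') <=
       2 * Num.max (rnorm I a * vnorm b) (vnorm a * rnorm I b)).
Proof.
move=> a_neq0 b_neq0 L_gt0 a' b' I.
rewrite -/(rounded L a) -/(rounded L b) in a' b' *.
have supp i : i \notin I -> a 0 i = 0 \/ b 0 i = 0.
  by rewrite inE negb_and !negbK => /orP[] /eqP; [left | right].
split; first by move=> i; split; apply: rounded_sqr_frac.
split; first by move=> m h _; split; apply: sketch_rounded.
split=> [eps /andP[eps_gt0 _] L_large | n3_le_L].
  have M_ge0 : 0 <= Num.max (rnorm I a * vnorm b) (vnorm a * rnorm I b).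
    by rewrite le_max mulr_ge0 ?sqrtr_ge0.
  apply: le_trans (dotv_perturb _ _ supp (rounded_le L_gt0 a_neq0) (rounded_le L_gt0 b_neq0)
    (rounded_dist L_gt0 a_neq0) (rounded_dist L_gt0 b_neq0)) _; rewrite ?ler0n ?sqrtr_ge0 //.
  exact: (ler_wpM2r M_ge0 (rounding_error_le eps_gt0 L_large)).
rewrite !vnorm_rounded // maxr_pMr //; apply: le_max2.
  rewrite mulrA ler_wpM2r ?sqrtr_ge0 // rnorm_le // => i.
  exact: rounded_le2.
rewrite mulrCA ler_wpM2l ?sqrtr_ge0 // rnorm_le // => i.
exact: rounded_le2.
Qed.
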